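(* Let $\theta\in(0,\pi/2)$. For a qubit operator write $\rho=\tfrac12(\mathbb{1}+x\hat X+z\hat Z)$ with Pauli operators $\hat X,\hat Z$. Consider the pure states $|\psi\rangle\langle\psi|$, $|\bar\psi\rangle\langle\bar\psi|$, $|\phi\rangle\langle\phi|$, $|\bar\phi\rangle\langle\bar\phi|$ with Bloch vectors $(x,z)=(\sin\theta,\cos\theta)$, $(-\sin\theta,-\cos\theta)$, $(\sin\theta,-\cos\theta)$, $(-\sin\theta,\cos\theta)$ respectively, and the three binary measurements $M_\psi=\{|\psi\rangle\langle\psi|,|\bar\psi\rangle\langle\bar\psi|\}$, $M_\phi=\{|\phi\rangle\langle\phi|,|\bar\phi\rangle\langle\bar\phi|\}$, $M_g=\{E_{g_\psi},E_{g_\phi}\}$ with $E_{g_\psi}=|0\rangle\langle0|$, $E_{g_\phi}=|1\rangle\langle1|$ ($Z$ basis). For $r\in[0,1]$, replace every effect $E$ by $\mathcal{D}^{\mathrm{deph}}_r(E):=(1-r)E+r\sum_{i\in\{0,1\}}\langle i|E|i\rangle\,|i\rangle\langle i|$, keeping the four states unchanged. Then the minimal $r$ for which the resulting prepare-and-measure scenario admits a noncontextual ontological model is $$r^{\mathrm{deph}}_{\min}=1-\frac{1-\cos\theta}{\sin^2\theta}.$$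
   Context: A noncontextual ontological model for a quantum prepare-and-measure scenario consisting of a finite set $\mathcal{S}$ of density operators and a finite set $\mathcal{E}$ of effects (the elements of finitely many POVMs) is: a finite set $\Lambda$; a map $\rho\mapsto\mu_\rho$ from the convex hull of $\mathcal{S}$ to probability distributions on $\Lambda$ that is convex-linear; and a map $E\mapsto\xi_E$ from the convex hull of $\mathcal{E}\cup\{0,\mathbb{1}\}$ to functions $\Lambda\to[0,1]$ that is convex-linear with $\xi_{\mathbb{1}}\equiv1$; such that $\mathrm{Tr}(E\rho)=\sum_{\lambda}\xi_E(\lambda)\mu_\rho(\lambda)$ for all $\rho\in\mathcal{S}$, $E\in\mathcal{E}$. Convex-linearity encodes noncontextuality: operationally equivalent (equal-operator) mixtures receive identical ontological representations. *)

From HB Require Import structures.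
From mathcomp Require Import all_boot all_order all_algebra.
From mathcomp Require Import all_classical all_reals all_analysis.
Set Implicit Arguments. Unset Strict Implicit. Unset Printing Implicit Defensive.
Import Order.TTheory GRing.Theory Num.Theory.
Local Open Scope ring_scope.

Section Defs.
Variable R : realType.

(* Qubit operators: all operators of the scenario are real combinations of
   1, X, Z, hence real symmetric 2x2 matrices in the computational basis. *)
Definition pauliX : 'M[R]_2 := \matrix_(i < 2, j < 2) (if i == j then 0 else 1).
Definition pauliZ : 'M[R]_2 :=
  \matrix_(i < 2, j < 2) (if i == j then (if i == 0 :> nat then 1 else -1) else 0).

Definition bloch (x z : R) : 'M[R]_2 :=
  2^-1 *: (1%:M + x *: pauliX + z *: pauliZ).

Definition psi (t : R) := bloch (sin t) (cos t).
Definition psibar (t : R) := bloch (- sin t) (- cos t).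
Definition phi (t : R) := bloch (sin t) (- cos t).
Definition phibar (t : R) := bloch (- sin t) (cos t).
Definition ketbra (i : 'I_2) : 'M[R]_2 := delta_mx i i.

Definition deph (r : R) (E : 'M[R]_2) : 'M[R]_2 :=
  (1 - r) *: E + r *: \sum_(i < 2) E i i *: ketbra i.

Definition in_hull (s : seq 'M[R]_2) (A : 'M[R]_2) : Prop :=
  exists w : 'I_(size s) -> R,
    (forall i, 0 <= w i) /\ \sum_i w i = 1 /\ A = \sum_i w i *: s`_i.

Definition convex_linear_on (n : nat) (P : 'M[R]_2 -> Prop)
  (f : 'M[R]_2 -> 'I_n -> R) : Prop :=
  forall A B (t : R), P A -> P B -> 0 <= t <= 1 ->
    forall l, f (t *: A + (1 - t) *: B) l = t * f A l + (1 - t) * f B l.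

(* Noncontextual ontological model for states S and effects E, with a finite
   ontic state space Lambda = 'I_n. *)
Definition NC_model (S E : seq 'M[R]_2) : Prop :=
  exists (n : nat) (mu xi : 'M[R]_2 -> 'I_n -> R),
    (forall rho, in_hull S rho -> (forall l, 0 <= mu rho l) /\ \sum_l mu rho l = 1)
    /\ convex_linear_on (in_hull S) mu
    /\ (forall e, in_hull (0 :: 1%:M :: E) e -> forall l, 0 <= xi e l <= 1)
    /\ convex_linear_on (in_hull (0 :: 1%:M :: E)) xi
    /\ (forall l, xi 1%:M l = 1)
    /\ (forall rho e, rho \in S -> e \in E ->
          \tr (e *m rho) = \sum_l xi e l * mu rho l).

Definition states (t : R) : seq 'M[R]_2 := [:: psi t; psibar t; phi t; phibar t].

Definition effects (t r : R) : seq 'M[R]_2 :=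
  map (deph r) [:: psi t; psibar t; phi t; phibar t; ketbra 0; ketbra 1].

Definition admits_NC (t r : R) : Prop := NC_model (states t) (effects t r).

End Defs.

(* Every operator of the scenario is a real symmetric 2x2 matrix, determined by
   its trace and its Bloch coordinates x = A01 + A10 and z = A00 - A11; dephasing
   with strength r multiplies x by 1 - r and keeps z.

   Lower bound: {psi, psibar} and {phi, phibar} are two decompositions of the
   maximally mixed state, so a noncontextual model has
   mu_psi + mu_psibar = mu_phi + mu_phibar at every ontic state.  There the
   response differences xi_D(psi) - xi_D(phibar) and xi_g0 - xi_g1 lie in [-1, 1],
   so pairing them with mu_psi - mu_phibar and mu_psi - mu_phi gives at most
   mu_psi + mu_psibar; summing over the ontic states yields
   (1 - r) sin^2 t + cos t <= 1.

   Upper bound: when k := 1 - r satisfies k sin^2 t + cos t = 1 there is a model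
   with four ontic states, two carrying the X-part x x'/2 of the Born rule
   (1 + x x' + z z')/2 with total weight k sin^2 t and two carrying its Z-part
   with weight cos t. *)

From HB Require Import structures.
From mathcomp Require Import all_boot all_order all_algebra.
From mathcomp Require Import all_classical all_reals all_analysis.
From mathcomp Require Import ring lra.
Import Order.TTheory GRing.Theory Num.Theory.
Local Open Scope ring_scope.
Set Implicit Arguments. Unset Strict Implicit. Unset Printing Implicit Defensive.

Section BlochCoordinates.
Variable R : realType.
Implicit Types (A E : 'M[R]_2) (u v w x z r : R).

Definition bloch_x A : R := A 0 1 + A 1 0.
Definition bloch_z A : R := A 0 0 - A 1 1.

(* Linear, not merely affine, in A: the hull of the effects contains 0. *)
Definition bloch_form u v w A : R := u * \tr A + v * bloch_x A + w * bloch_z A.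

Lemma sum_ord2 (f : 'I_2 -> R) : \sum_i f i = f 0 + f 1.
Proof. by rewrite !big_ord_recl big_ord0 addr0; congr (f _ + f _); apply: val_inj. Qed.

Lemma mxtrace2 A : \tr A = A 0 0 + A 1 1.
Proof. exact: sum_ord2. Qed.

Lemma bloch_form_is_scalar u v w : scalar (bloch_form u v w).
Proof.
by move=> a A B; rewrite /bloch_form /bloch_x /bloch_z !mxtrace2 !mxE; ring.
Qed.

HB.instance Definition _ u v w :=
  GRing.isLinear.Build R 'M[R]_2 R *%R (bloch_form u v w)
    (bloch_form_is_scalar u v w).

Lemma mxtrace_bloch x z : \tr (bloch x z) = 1.
Proof. by rewrite mxtrace2 !mxE /=; field. Qed.

Lemma bloch_x_bloch x z : bloch_x (bloch x z) = x.
Proof. by rewrite /bloch_x !mxE /=; field. Qed.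

Lemma bloch_z_bloch x z : bloch_z (bloch x z) = z.
Proof. by rewrite /bloch_z !mxE /=; field. Qed.

Lemma bloch_form_bloch u v w x z : bloch_form u v w (bloch x z) = u + v * x + w * z.
Proof. by rewrite /bloch_form mxtrace_bloch bloch_x_bloch bloch_z_bloch mulr1. Qed.

Lemma bloch_form1 u v w : bloch_form u v w 1%:M = u * 2.
Proof. by rewrite /bloch_form /bloch_x /bloch_z mxtrace1 !mxE /=; ring. Qed.

Lemma mxtrace_mul_bloch E x z :
  \tr (E *m bloch x z) = (\tr E + bloch_x E * x + bloch_z E * z) / 2.
Proof.
by rewrite !mxtrace2 /bloch_x /bloch_z !mxE !sum_ord2 !mxE /=; field.
Qed.

Lemma deph_bloch r x z : deph r (bloch x z) = bloch ((1 - r) * x) z.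
Proof.
apply/matrixP => i j; rewrite !mxE summxE sum_ord2 !mxE.
by case: i j => [[|[|//]] ?] [[|[|//]] ?] /=; field.
Qed.

Lemma ketbra0_bloch : ketbra R 0 = bloch 0 1.
Proof.
by apply/matrixP => i j; rewrite !mxE; case: i j => [[|[|//]] ?] [[|[|//]] ?] /=; field.
Qed.

Lemma ketbra1_bloch : ketbra R 1 = bloch 0 (-1).
Proof.
by apply/matrixP => i j; rewrite !mxE; case: i j => [[|[|//]] ?] [[|[|//]] ?] /=; field.
Qed.

Lemma bloch_midN x z : 2^-1 *: bloch x z + (1 - 2^-1) *: bloch (- x) (- z) = 2^-1%:M.
Proof.
by apply/matrixP => i j; rewrite !mxE; case: i j => [[|[|//]] ?] [[|[|//]] ?] /=; field.
Qed.

End BlochCoordinates.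

Section Convexity.
Variable R : realType.
Implicit Types (s : seq 'M[R]_2) (A : 'M[R]_2).

Lemma in_hull_mem s A : A \in s -> in_hull s A.
Proof.
move=> sA; pose j := Ordinal (etrans (index_mem A s) sA).
exists (fun i => (i == j)%:R); split; first by move=> i; exact: ler0n.
split; first by rewrite (bigD1 j) //= eqxx big1 ?addr0 // => i /negbTE ->.
rewrite (bigD1 j) //= eqxx scale1r nth_index // big1 ?addr0 // => i /negbTE ->.
by rewrite scale0r.
Qed.

Lemma in_hull_scalar_itv (f : {scalar 'M[R]_2}) s A (lo hi : R) :
  in_hull s A -> {in s, forall B, lo <= f B <= hi} -> lo <= f A <= hi.
Proof.
case=> w [w_ge0 [w_sum1 ->]] f_itv; rewrite linear_sum.
have f_nth (i : 'I_(size s)) : lo <= f s`_i <= hi by apply/f_itv/mem_nth.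
have -> : lo = \sum_i w i * lo by rewrite -mulr_suml w_sum1 mul1r.
have -> : hi = \sum_i w i * hi by rewrite -mulr_suml w_sum1 mul1r.
by apply/andP; split; apply: ler_sum => i _; rewrite linearZ /=;
  apply: ler_wpM2l => //; case/andP: (f_nth i).
Qed.

Lemma convex_linear_on_mid n (P : 'M[R]_2 -> Prop) (f : 'M[R]_2 -> 'I_n -> R)
    A B C D :
  convex_linear_on P f -> P A -> P B -> P C -> P D ->
  2^-1 *: A + (1 - 2^-1) *: B = 2^-1 *: C + (1 - 2^-1) *: D ->
  forall l, f A l + f B l = f C l + f D l.
Proof.
move=> f_cvx PA PB PC PD mid l.
have half : 0 <= (2^-1 : R) <= 1 by apply/andP; split; lra.
have := congr1 (f^~ l) mid.
by rewrite (f_cvx _ _ _ PA PB half) (f_cvx _ _ _ PC PD half); lra.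
Qed.

End Convexity.

Section DephasedModel.
Variables (R : realType) (t k : R).
Local Notation s := (sin t).
Local Notation c := (cos t).

Definition nc_mu (rho : 'M[R]_2) (l : 'I_4) : R :=
  match val l with
  | 0 => bloch_form (k * s ^+ 2 / 2) (k * s / 2) 0 rho
  | 1 => bloch_form (k * s ^+ 2 / 2) (- (k * s / 2)) 0 rho
  | 2 => bloch_form (c / 2) 0 (1 / 2) rho
  | _ => bloch_form (c / 2) 0 (- (1 / 2)) rho
  end.

Definition nc_xi (E : 'M[R]_2) (l : 'I_4) : R :=
  match val l with
  | 0 => bloch_form (1 / 2) ((k * s)^-1 / 2) 0 E
  | 1 => bloch_form (1 / 2) (- ((k * s)^-1 / 2)) 0 E
  | 2 => bloch_form (1 / 2) 0 (1 / 2) E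
  | _ => bloch_form (1 / 2) 0 (- (1 / 2)) E
  end.

Lemma nc_mu_convex (P : 'M[R]_2 -> Prop) : convex_linear_on P nc_mu.
Proof.
by move=> A B a _ _ _ [[|[|[|[|//]]]] ?]; rewrite /nc_mu /= linearD !linearZ.
Qed.

Lemma nc_xi_convex (P : 'M[R]_2 -> Prop) : convex_linear_on P nc_xi.
Proof.
by move=> A B a _ _ _ [[|[|[|[|//]]]] ?]; rewrite /nc_xi /= linearD !linearZ.
Qed.

Lemma nc_mu_sum rho : k * s ^+ 2 + c = 1 -> \sum_l nc_mu rho l = \tr rho.
Proof.
move=> k_sin2_cos; rewrite !big_ord_recl big_ord0 /nc_mu /bloch_form /=.
have -> : c = 1 - k * s ^+ 2 by rewrite -k_sin2_cos addrC addKr.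
by field.
Qed.

Lemma nc_mu_itv rho l : 0 <= c -> 0 < k -> k * s ^+ 2 + c = 1 ->
  in_hull (states t) rho -> 0 <= nc_mu rho l <= 1.
Proof.
move=> c_ge0 k_gt0 k_sin2_cos hrho.
have ks2_ge0 : 0 <= k * s ^+ 2 by rewrite mulr_ge0 ?sqr_ge0 ?ltW.
case: l => [[|[|[|[|//]]]] ?]; rewrite /nc_mu /=;
  apply: (in_hull_scalar_itv hrho) => B; rewrite !inE => /or4P[]/eqP->;
  by rewrite /= /psi /psibar /phi /phibar bloch_form_bloch; apply/andP; split; lra.
Qed.

Lemma nc_xi_itv E l : 0 < k * s ->
  in_hull [:: 0, 1%:M & effects t (1 - k)] E -> 0 <= nc_xi E l <= 1.
Proof.
move=> ks_gt0 hE; have ks_inv : (k * s)^-1 * (k * s) = 1 by rewrite mulVf // gt_eqF.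
have c_geN1 := cos_geN1 t; have c_le1 := cos_le1 t.
case: l => [[|[|[|[|//]]]] ?]; rewrite /nc_xi /=;
  apply: (in_hull_scalar_itv hE); apply/allP;
  rewrite /= linear0 bloch_form1 ketbra0_bloch ketbra1_bloch !deph_bloch !bloch_form_bloch
    subKr andbT; repeat (apply/andP; split); nra.
Qed.

Lemma nc_reproduces E x z : k != 0 -> s != 0 -> k * s ^+ 2 + c = 1 ->
  \tr (E *m bloch x z) = \sum_l nc_xi E l * nc_mu (bloch x z) l.
Proof.
move=> k_neq0 s_neq0 k_sin2_cos.
rewrite mxtrace_mul_bloch !big_ord_recl big_ord0 /nc_xi /nc_mu /= !bloch_form_bloch.
have -> : c = 1 - k * s ^+ 2 by rewrite -k_sin2_cos addrC addKr.
rewrite /bloch_form; move: (\tr E) (bloch_x E) (bloch_z E) => a b d.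
by field; apply/andP.
Qed.

Lemma admits_NC_dephased : 0 < s -> 0 <= c -> 0 < k -> k * s ^+ 2 + c = 1 ->
  admits_NC t (1 - k).
Proof.
move=> s_gt0 c_ge0 k_gt0 k_sin2_cos.
exists 4%N, nc_mu, nc_xi; split.
  move=> rho hrho; split.
    by move=> l; case/andP: (nc_mu_itv l c_ge0 k_gt0 k_sin2_cos hrho).
  rewrite nc_mu_sum //; apply/eqP; rewrite eq_sym eq_le.
  apply: (in_hull_scalar_itv (f := @mxtrace R 2) hrho) => B.
  rewrite !inE => /or4P[]/eqP->;
  by rewrite /= /psi /psibar /phi /phibar mxtrace_bloch lexx.
split; first exact: nc_mu_convex.
split; first by move=> E hE l; apply: nc_xi_itv; rewrite ?mulr_gt0.
split; first exact: nc_xi_convex.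
split; first by case=> [[|[|[|[|//]]]] ?]; rewrite /nc_xi /= bloch_form1; field.
move=> rho E; rewrite !inE => /or4P[]/eqP-> _;
  by apply: nc_reproduces; rewrite ?gt_eqF.
Qed.

End DephasedModel.

Section NoncontextualityBound.
Variable R : realType.

Lemma mxtrace_deph_bloch (r x' z' x z : R) :
  \tr (deph r (bloch x' z') *m bloch x z) = (1 + (1 - r) * x' * x + z' * z) / 2.
Proof.
by rewrite deph_bloch mxtrace_mul_bloch mxtrace_bloch bloch_x_bloch bloch_z_bloch.
Qed.

Lemma mulBr_le_norm (a b m : R) : 0 <= a <= 1 -> 0 <= b <= 1 -> (a - b) * m <= `|m|.
Proof.
move=> /andP[a_ge0 a_le1] /andP[b_ge0 b_le1].
rewrite (le_trans (ler_norm _)) // normrM ler_piMl //.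
by rewrite ler_norml; apply/andP; split; lra.
Qed.

Lemma normB_add_normB_le (m1 m2 m3 m4 : R) :
  0 <= m1 -> 0 <= m2 -> 0 <= m3 -> 0 <= m4 -> m1 + m2 = m3 + m4 ->
  `|m1 - m4| + `|m1 - m3| <= m1 + m2.
Proof.
move=> m1_ge0 m2_ge0 m3_ge0 m4_ge0 m_eq.
have [h4|h4] := lerP 0 (m1 - m4); [rewrite (ger0_norm h4) | rewrite (ltr0_norm h4)];
  (have [h3|h3] := lerP 0 (m1 - m3); [rewrite (ger0_norm h3) | rewrite (ltr0_norm h3)]);
  lra.
Qed.

Lemma pairing_le (a b g h m1 m2 m3 m4 : R) :
  0 <= a <= 1 -> 0 <= b <= 1 -> 0 <= g <= 1 -> 0 <= h <= 1 ->
  0 <= m1 -> 0 <= m2 -> 0 <= m3 -> 0 <= m4 -> m1 + m2 = m3 + m4 ->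
  (a - b) * (m1 - m4) + (g - h) * (m1 - m3) <= m1 + m2.
Proof.
move=> a01 b01 g01 h01 m1_ge0 m2_ge0 m3_ge0 m4_ge0 m_eq.
apply: le_trans (lerD (mulBr_le_norm _ a01 b01) (mulBr_le_norm _ g01 h01)) _.
exact: normB_add_normB_le.
Qed.

Lemma sumr_mulBB n (a b c d : 'I_n -> R) :
  \sum_l (a l - b l) * (c l - d l) =
  \sum_l a l * c l - \sum_l a l * d l - \sum_l b l * c l + \sum_l b l * d l.
Proof.
rewrite -!sumrB -big_split /=; apply: eq_bigr => l _; ring.
Qed.

Lemma admits_NC_dephased_bound (t r : R) :
  admits_NC t r -> (1 - r) * sin t ^+ 2 + cos t <= 1.
Proof.
move=> [n [mu [xi [mu_prob [mu_cvx [xi_01 [_ [_ born]]]]]]]].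
have mu_ge0 rho l : rho \in states t -> 0 <= mu rho l.
  by move=> /in_hull_mem /mu_prob [+ _]; apply.
have mu_sum1 rho : rho \in states t -> \sum_l mu rho l = 1.
  by move=> /in_hull_mem /mu_prob [].
have xi_itv E l : E \in effects t r -> 0 <= xi E l <= 1.
  by move=> hE; apply: xi_01; apply: in_hull_mem; rewrite 2!in_cons hE !orbT.
have [psiS psibarS phiS phibarS] : [/\ psi t \in states t, psibar t \in states t,
    phi t \in states t & phibar t \in states t] by split; rewrite !inE eqxx ?orbT.
pose Epsi := deph r (psi t); pose Ephibar := deph r (phibar t).
pose G0 := deph r (ketbra R 0); pose G1 := deph r (ketbra R 1).
have [EpsiE EphibarE G0E G1E] : [/\ Epsi \in effects t r, Ephibar \in effects t r,
    G0 \in effects t r & G1 \in effects t r].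
  by split; apply: map_f; rewrite !inE eqxx ?orbT.
have mu_mix l : mu (psi t) l + mu (psibar t) l = mu (phi t) l + mu (phibar t) l.
  apply: (convex_linear_on_mid mu_cvx (in_hull_mem psiS) (in_hull_mem psibarS)
                                      (in_hull_mem phiS) (in_hull_mem phibarS)).
  by rewrite bloch_midN -[X in _ *: bloch (- sin t) X]opprK bloch_midN.
pose D l := (xi Epsi l - xi Ephibar l) * (mu (psi t) l - mu (phibar t) l)
          + (xi G0 l - xi G1 l) * (mu (psi t) l - mu (phi t) l).
have D_sum : \sum_l D l = 2 * ((1 - r) * sin t ^+ 2 + cos t).
  rewrite big_split /= !sumr_mulBB.
  rewrite -(born _ _ psiS EpsiE) -(born _ _ phibarS EpsiE).
  rewrite -(born _ _ psiS EphibarE) -(born _ _ phibarS EphibarE).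
  rewrite -(born _ _ psiS G0E) -(born _ _ phiS G0E).
  rewrite -(born _ _ psiS G1E) -(born _ _ phiS G1E).
  rewrite /Epsi /Ephibar /G0 /G1 ketbra0_bloch ketbra1_bloch.
  by rewrite /psi /phi /phibar !mxtrace_deph_bloch; field.
have D_le l : D l <= mu (psi t) l + mu (psibar t) l.
  apply: (pairing_le (xi_itv _ l EpsiE) (xi_itv _ l EphibarE) (xi_itv _ l G0E)
                     (xi_itv _ l G1E) _ _ _ _ (mu_mix l)); exact: mu_ge0.
have : \sum_l D l <= \sum_l (mu (psi t) l + mu (psibar t) l).
  by apply: ler_sum => l _; exact: D_le.
by rewrite D_sum big_split /= !mu_sum1 //; lra.
Qed.

End NoncontextualityBound.

Theorem mainTheorem2 (R : realType) (t : R) (ht : 0 < t < pi / 2) :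
  let rmin := 1 - (1 - cos t) / (sin t ^+ 2) in
  (0 <= rmin <= 1) /\ admits_NC t rmin /\
  (forall r : R, 0 <= r <= 1 -> admits_NC t r -> rmin <= r).
Proof.
rewrite /=; set k := (1 - cos t) / sin t ^+ 2.
have s_gt0 : 0 < sin t := sin_gt0_pihalf ht.
have c_gt0 : 0 < cos t.
  apply: cos_gt0_pihalf; case/andP: ht => t_gt0 ->.
  by have := @pi_gt0 R; rewrite andbT; lra.
have s2_gt0 : 0 < sin t ^+ 2 by rewrite exprn_gt0.
have sin2 := sin2cos2 t.
have k_eq : k * sin t ^+ 2 + cos t = 1 by rewrite divfK ?gt_eqF //; ring.
have c_lt1 : cos t < 1 by nra.
have k_gt0 : 0 < k by rewrite divr_gt0 // subr_gt0.
have k_le1 : k <= 1 by rewrite ler_pdivrMr // mul1r sin2; nra.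
split; first by apply/andP; split; lra.
split; first exact: admits_NC_dephased s_gt0 (ltW c_gt0) k_gt0 k_eq.
move=> r _ /admits_NC_dephased_bound bound.
have : (1 - r) * sin t ^+ 2 <= k * sin t ^+ 2 by lra.
by rewrite ler_pM2r // => ?; lra.
Qed.
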